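(* Let $L$ be a finite self-dual lattice and let $W_1,W_2\subseteq L$ both contain all join-irreducible elements of $L$. Then the induced subgraphs $\nabla_L^{W_1}$ and $\nabla_L^{W_2}$ of the duality graph $\nabla_L$ are isomorphic if and only if there exists $\sigma\in\mathrm{Aut}(L)$ with $\sigma(W_1)=W_2$.
   Context: A self-dual lattice is a lattice $L$ with a map $a\mapsto a^\perp$ of $L$ to itself that is involutive and order-reversing. $\mathrm{Aut}(L)$ is the group of lattice automorphisms $\sigma$ of $L$ satisfying $\sigma(a^\perp)=\sigma(a)^\perp$ for all $a$. The duality graph $\nabla_L$ has vertex set $L$, with $a,b$ adjacent iff $a\le b^\perp$ (loops allowed); $\nabla_L^W$ is its induced subgraph on $W$ (vertex set $W$, inherited adjacency). An element $a$ is (completely) join-irreducible if $a=\bigvee A$ for a subset $A\subseteq L$ implies $a\in A$. *)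

From HB Require Import structures.
From mathcomp Require Import all_boot all_order.
Set Implicit Arguments. Unset Strict Implicit. Unset Printing Implicit Defensive.
Import Order.TTheory.
Local Open Scope order_scope.

(* A finite (nonempty) lattice is a finTBLatticeType; a self-dual lattice is
   such a lattice with a map perp that is involutive and order-reversing. *)
Definition self_dual_map (d : Order.disp_t) (T : finTBLatticeType d)
    (perp : T -> T) : Prop :=
  involutive perp /\ (forall a b : T, a <= b -> perp b <= perp a).

Definition is_aut (d : Order.disp_t) (T : finTBLatticeType d)
    (perp : T -> T) (s : T -> T) : Prop :=
  bijective s /\
  (forall a b : T, s (a `|` b) = s a `|` s b) /\
  (forall a b : T, s (a `&` b) = s a `&` s b) /\
  (forall a : T, s (perp a) = perp (s a)).

Definition join_irreducible (d : Order.disp_t) (T : finTBLatticeType d)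
    (a : T) : Prop :=
  forall A : {set T}, a = \join_(x in A) x -> a \in A.

Definition dual_adj (d : Order.disp_t) (T : finTBLatticeType d)
    (perp : T -> T) (a b : T) : bool := a <= perp b.

Definition induced_iso (d : Order.disp_t) (T : finTBLatticeType d)
    (perp : T -> T) (W1 W2 : {set T}) : Prop :=
  exists f : T -> T,
    {in W1 &, injective f} /\ f @: W1 = W2 /\
    {in W1 &, forall a b, dual_adj perp a b = dual_adj perp (f a) (f b)}.

From HB Require Import structures.
From mathcomp Require Import all_boot all_order.
Set Implicit Arguments. Unset Strict Implicit. Unset Printing Implicit Defensive.
Import Order.TTheory.
Local Open Scope order_scope.

(* Every element is the join of the elements of W below it, because W contains
   the join-irreducibles.  Hence the elements [perp b], b in W, are meet-dense,
   so the order, and with it the whole lattice, is determined by the duality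
   relation restricted to W x L.  A graph isomorphism f : W1 -> W2 is therefore
   monotone, and x |-> \join_(a in W1, a <= x) f a is an order automorphism
   commuting with perp that extends f.  Conversely an automorphism preserves
   the duality relation. *)

Section JoinDense.
Variables (d : Order.disp_t) (T : finTBLatticeType d).

Lemma join_irreducible_lt (x : T) :
  x != \join_(y | y < x) y -> join_irreducible x.
Proof.
move=> xNj A eA; apply/idPn => xNA; move/negP: xNj; apply.
rewrite eq_le; apply/andP; split; last by apply/joinsP => y /ltW.
rewrite {1}eA; apply/joinsP => a aA; apply: (@joins_sup _ _ _ a).
have ax : a <= x by rewrite eA; apply: (@joins_sup _ _ _ a).
by rewrite lt_neqAle ax andbT; apply: contraNneq xNA => <-.
Qed.

Variable W : {set T}.
Hypothesis W_join_irr : forall a : T, join_irreducible a -> a \in W.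

Lemma join_dense (x : T) : x = \join_(a | (a \in W) && (a <= x)) a.
Proof.
apply: le_anti; apply/andP; split; last by apply/joinsP => a /andP[_ ->].
have [n] := ubnP #|[set z : T | z < x]|; elim: n x => // n IH x.
rewrite ltnS => x_n.
have [xW | xNW] := boolP (x \in W).
  by apply: (@joins_sup _ _ _ x); rewrite xW lexx.
have /eqP {1}-> : x == \join_(y | y < x) y.
  by apply: contraNT xNW => /join_irreducible_lt /W_join_irr.
apply/joinsP => y yx; apply: le_trans (IH y _) _.
  apply: leq_trans x_n; apply: proper_card; apply/properP; split.
    by apply/subsetP => z; rewrite !inE => /lt_trans; apply.
  by exists y; rewrite !inE ?yx ?ltxx.
apply/joinsP => a /andP[aW ay]; apply: (@joins_sup _ _ _ a).
by rewrite aW (le_trans ay (ltW yx)).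
Qed.

End JoinDense.

Section SelfDual.
Variables (d : Order.disp_t) (T : finTBLatticeType d) (perp : T -> T).
Hypothesis perp_self_dual : self_dual_map perp.

Lemma perpK : involutive perp. Proof. by case: perp_self_dual. Qed.

Lemma le_perp (a b : T) : (perp a <= perp b) = (b <= a).
Proof.
case: perp_self_dual => K M; apply/idP/idP; last exact: M.
by rewrite -{2}(K a) -{2}(K b); apply: M.
Qed.

Lemma le_perpC (a b : T) : (a <= perp b) = (b <= perp a).
Proof. by rewrite -le_perp perpK. Qed.

Variable W : {set T}.
Hypothesis W_join_irr : forall a : T, join_irreducible a -> a \in W.

Lemma le_of_perp (x z : T) :
  (forall b, b \in W -> z <= perp b -> x <= perp b) -> x <= z.
Proof.
move=> H; rewrite -le_perp (join_dense W_join_irr (perp z)).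
apply/joinsP => b /andP[bW bz].
by rewrite le_perpC; apply: H => //; rewrite le_perpC.
Qed.

Lemma eq_of_perp (x z : T) :
  (forall b, b \in W -> (x <= perp b) = (z <= perp b)) -> x = z.
Proof.
by move=> H; apply: le_anti; rewrite !le_of_perp // => b bW; rewrite H.
Qed.

End SelfDual.

Section OrderIsomorphism.
Variables (d d' : Order.disp_t) (T : latticeType d) (T' : latticeType d').
Variables (s : T -> T') (g : T' -> T).
Hypotheses (sK : cancel g s) (le_s : forall x y, (s x <= s y) = (x <= y)).

Lemma order_iso_join (x y : T) : s (x `|` y) = s x `|` s y.
Proof.
rewrite -[RHS]sK; congr s; apply: le_anti; apply/andP; split.
  by rewrite leUx -!le_s sK leUl leUr.
by rewrite -le_s sK leUx !le_s leUl leUr.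
Qed.

Lemma order_iso_meet (x y : T) : s (x `&` y) = s x `&` s y.
Proof.
rewrite -[RHS]sK; congr s; apply: le_anti; apply/andP; split.
  by rewrite -le_s sK lexI !le_s leIl leIr.
by rewrite lexI -!le_s sK leIl leIr.
Qed.

End OrderIsomorphism.

Section Automorphism.
Variables (d : Order.disp_t) (T : finTBLatticeType d) (perp : T -> T).

Lemma is_aut_order_iso (s : T -> T) :
  (forall x y, (s x <= s y) = (x <= y)) ->
  (forall x, s (perp x) = perp (s x)) -> is_aut perp s.
Proof.
move=> le_s s_perp; have s_inj : injective s.
  by move=> x y e; apply: le_anti; rewrite -[x <= y]le_s -[y <= x]le_s e lexx.
have [g sg gs] := injF_bij s_inj.
split; first by exists g.
by split; [|split] => // x y; [apply: order_iso_join | apply: order_iso_meet].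
Qed.

Lemma le_aut (s : T -> T) :
  is_aut perp s -> forall x y, (s x <= s y) = (x <= y).
Proof.
case=> [[g sK _] [sU _]] x y; apply/join_idPr/join_idPr; rewrite -sU.
  by move/(can_inj sK).
by move->.
Qed.

End Automorphism.

Section Extension.
Variables (d : Order.disp_t) (T : finTBLatticeType d) (perp : T -> T).
Hypothesis perp_self_dual : self_dual_map perp.
Variables (W1 W2 : {set T}) (f : T -> T).
Hypotheses (W1_join_irr : forall a : T, join_irreducible a -> a \in W1)
           (W2_join_irr : forall a : T, join_irreducible a -> a \in W2).
Hypotheses (fW1 : f @: W1 = W2)
           (f_adj : {in W1 &, forall a b, (a <= perp b) = (f a <= perp (f b))}).

Lemma forall_W2 (P : T -> Prop) :
  (forall b, b \in W1 -> P (f b)) -> forall b', b' \in W2 -> P b'.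
Proof. by move=> H b'; rewrite -fW1 => /imsetP[b bW ->]; apply: H. Qed.

Lemma f_mono : {in W1 &, {homo f : a c / a <= c}}.
Proof.
move=> a c aW cW ac; apply: (le_of_perp perp_self_dual W2_join_irr).
by apply: forall_W2 => b bW; rewrite -!f_adj // => /(le_trans ac).
Qed.

Definition extension (x : T) : T := \join_(a | (a \in W1) && (a <= x)) f a.

Lemma extension_W1 a : a \in W1 -> extension a = f a.
Proof.
move=> aW; apply: le_anti; rewrite (@joins_sup _ _ _ a) ?aW ?lexx ?andbT //.
by apply/joinsP => c /andP[cW ca]; apply: f_mono.
Qed.

Lemma extension_le_perp x b :
  b \in W1 -> (extension x <= perp (f b)) = (x <= perp b).
Proof.
move=> bW; rewrite [in RHS](join_dense W1_join_irr x).
by apply/joinsP/joinsP => H a /[dup] /andP[aW _] /H; rewrite (f_adj aW bW).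
Qed.

Lemma le_extension x y : (extension x <= extension y) = (x <= y).
Proof.
apply/idP/idP => [sxy | xy].
  apply: (le_of_perp perp_self_dual W1_join_irr) => b bW yb.
  by rewrite -(extension_le_perp _ bW) (le_trans sxy) // extension_le_perp.
apply/joinsP => a /andP[aW ax]; apply: (@joins_sup _ _ _ a).
by rewrite aW (le_trans ax xy).
Qed.

Lemma extension_perp x : extension (perp x) = perp (extension x).
Proof.
apply: (eq_of_perp perp_self_dual W2_join_irr); apply: forall_W2 => b bW.
rewrite extension_le_perp // !(le_perp perp_self_dual).
by rewrite -extension_W1 // le_extension.
Qed.

Lemma is_aut_extension : is_aut perp extension.
Proof. exact: is_aut_order_iso le_extension extension_perp. Qed.

Lemma extension_imset : extension @: W1 = W2.
Proof. by rewrite -fW1; apply: eq_in_imset => a; apply: extension_W1. Qed.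

End Extension.

Theorem mainTheorem19 (d : Order.disp_t) (T : finTBLatticeType d)
    (perp : T -> T) (W1 W2 : {set T}) :
  self_dual_map perp ->
  (forall a : T, join_irreducible a -> a \in W1) ->
  (forall a : T, join_irreducible a -> a \in W2) ->
  (induced_iso perp W1 W2 <->
   exists s : T -> T, is_aut perp s /\ s @: W1 = W2).
Proof.
move=> perp_self_dual W1_join_irr W2_join_irr; split.
  case=> f [_ [fW1 f_adj]]; exists (extension W1 f); split.
    exact: (is_aut_extension perp_self_dual W1_join_irr W2_join_irr fW1 f_adj).
  exact: (extension_imset perp_self_dual W2_join_irr fW1 f_adj).
case=> s [s_aut sW1]; exists s; split; last split => //.
  by case: s_aut => [[g sK _] _] x y _ _; apply: (can_inj sK).
move=> a b _ _; rewrite /dual_adj.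
by case: (s_aut) => [_ [_ [_ <-]]]; rewrite (le_aut s_aut).
Qed.
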